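(* Let $M$ be a matroid on a finite set $E$ with rank function $r$ and closure operator $\mathrm{cl}$, and let $\mathcal{C}$ be a family of circuits of $M$. Let $X\subseteq E$ and let $(C_1,\dots,C_t)$ be a proper $\mathcal{C}$-sequence. Then $r(X)\le|X\cup C_{\le t}|-t$. Moreover, if equality holds, then $C_{\le t}\subseteq\mathrm{cl}(X)$ and every $e\in X\setminus C_{\le t}$ is a coloop of $M|_X$.
   Context: For a sequence of circuits $(C_1,\dots,C_t)$, write $C_{\le i}=\bigcup_{j\le i}C_j$ and $C_{\le0}=\emptyset$. The sequence is proper if $C_i\not\subseteq C_{\le i-1}$ for all $2\le i\le t$. It is a $\mathcal{C}$-sequence if every $C_i$ belongs to $\mathcal{C}$. *)

From mathcomp Require Import all_boot all_order.
Set Implicit Arguments. Unset Strict Implicit. Unset Printing Implicit Defensive.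

Record matroid (E : finType) := Matroid {
  indep : {set E} -> bool;
  indep0 : indep set0;
  indep_sub : forall A B : {set E}, A \subset B -> indep B -> indep A;
  indep_aug : forall A B : {set E}, indep A -> indep B -> #|A| < #|B| ->
     exists2 e, e \in B :\: A & indep (e |: A)
}.

Section MatroidDefs.
Variables (E : finType) (M : matroid E).

Definition mrank (X : {set E}) : nat :=
  \max_(I : {set E} | indep M I && (I \subset X)) #|I|.

Definition circuit (C : {set E}) : bool :=
  ~~ indep M C && [forall e in C, indep M (C :\ e)].

Definition mclosure (X : {set E}) : {set E} :=
  [set e | mrank (e |: X) == mrank X].

Definition basis_restr (X B : {set E}) : bool :=
  [&& B \subset X, indep M B & [forall e in X :\: B, ~~ indep M (e |: B)]].

Definition coloop_restr (X : {set E}) (e : E) : bool :=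
  (e \in X) && [forall B : {set E}, basis_restr X B ==> (e \in B)].

Definition union_upto (s : seq {set E}) (i : nat) : {set E} :=
  \bigcup_(C <- take i s) C.

(* proper: C_i not contained in C_{<= i-1} for 2 <= i <= t (1-indexed) *)
Definition proper_seq (s : seq {set E}) : Prop :=
  forall i, 0 < i < size s -> ~~ (nth set0 s i \subset union_upto s i).

Definition Cseq (Cs : {set {set E}}) (s : seq {set E}) : Prop :=
  forall C, C \in s -> C \in Cs.

End MatroidDefs.

From mathcomp Require Import all_boot all_order.
From mathcomp Require Import zify.

Set Implicit Arguments.
Unset Strict Implicit.
Unset Printing Implicit Defensive.

(* The nullity n(Y) = |Y| - r(Y) is monotone, and by submodularity adding a
   circuit that is not contained in a set raises its nullity by at least one.
   Hence the union U of a proper circuit sequence of length t has n(U) >= t,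
   and r(X) + t <= r(X u U) + n(X u U) = |X u U|.  In the equality case
   r(X u U) = r(X), so U lies in cl(X); and for e in X \ U the same bound for
   X - e forces r(X - e) < r(X), i.e. e is in every basis of M|X. *)

Section Matroid.
Variables (E : finType) (M : matroid E).
Implicit Types (A B C I U X Y Z : {set E}) (s : seq {set E}).

Lemma indep_card_le_mrank I X : indep M I -> I \subset X -> #|I| <= mrank M X.
Proof.
move=> indI sIX.
by apply: (leq_bigmax_cond (P := fun J => indep M J && (J \subset X))); rewrite indI sIX.
Qed.

Lemma mrank_le_card X : mrank M X <= #|X|.
Proof. by apply/bigmax_leqP => I /andP[_ sIX]; apply: subset_leq_card. Qed.

Lemma mrankS X Y : X \subset Y -> mrank M X <= mrank M Y.
Proof.
move=> sXY; apply/bigmax_leqP => I /andP[indI sIX].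
exact: indep_card_le_mrank (subset_trans sIX sXY).
Qed.

Lemma mrank_indep I : indep M I -> mrank M I = #|I|.
Proof.
by move=> indI; apply/eqP; rewrite eqn_leq mrank_le_card indep_card_le_mrank.
Qed.

Lemma basis_restr_card X B : basis_restr M X B -> #|B| = mrank M X.
Proof.
case/and3P=> sBX indB /forallP maxB.
apply/eqP; rewrite eqn_leq indep_card_le_mrank //=.
apply/bigmax_leqP => K /andP[indK sKX]; rewrite leqNgt; apply/negP => ltBK.
have [e /setDP[eK eB] indeB] := indep_aug indB indK ltBK.
by move: (maxB e); rewrite inE eB (subsetP sKX e eK) indeB.
Qed.

Lemma basis_restr_exists I X : indep M I -> I \subset X ->
  exists2 B, basis_restr M X B & I \subset B.
Proof.
move=> indI sIX.
pose P := [pred J : {set E} | indep M J && (J \subset X)].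
have [B /maxsetP[/andP[indB sBX] maxB] sIB] :=
  @maxset_exists _ P I (introT andP (conj indI sIX)).
exists B => //; rewrite /basis_restr sBX indB; apply/forallP => e.
apply/implyP => /setDP[eX eB]; apply/negP => indeB.
have: e |: B = B by apply: maxB; rewrite ?subsetUr //= indeB subUset sub1set eX.
by move/setP/(_ e); rewrite setU11 (negPf eB).
Qed.

Lemma mrank_lt_card_dep Y : ~~ indep M Y -> mrank M Y < #|Y|.
Proof.
move=> depY; have [B basB _] := basis_restr_exists (indep0 M) (sub0set Y).
rewrite -(basis_restr_card basB) ltn_neqAle.
case/and3P: basB => sBY indB _; rewrite subset_leq_card // andbT.
apply: contra depY => /eqP eqBY.
by have /eqP <- : B == Y by rewrite eqEcard sBY eqBY leqnn.
Qed.

Lemma mrank_submod A C :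
  mrank M (A :|: C) + mrank M (A :&: C) <= mrank M A + mrank M C.
Proof.
have [I basI _] := basis_restr_exists (indep0 M) (sub0set (A :&: C)).
have /and3P[sIAC indI _] := basI.
have sIAuC : I \subset A :|: C by rewrite (subset_trans sIAC) // subIset ?subsetUl.
have [B basB sIB] := basis_restr_exists indI sIAuC.
have /and3P[sBAuC indB _] := basB.
have indBS D : indep M (B :&: D) by apply: indep_sub indB; apply: subsetIl.
have rA := indep_card_le_mrank (indBS A) (subsetIr B A).
have rC := indep_card_le_mrank (indBS C) (subsetIr B C).
have rAC : #|I| <= #|B :&: (A :&: C)| by rewrite subset_leq_card // subsetI sIB.
have splitB : (B :&: A) :|: (B :&: C) = B by rewrite -setIUr; apply/setIidPl.
rewrite -(basis_restr_card basB) -(basis_restr_card basI).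
have := cardsUI (B :&: A) (B :&: C); rewrite splitB setIACA setIid.
lia.
Qed.

Definition nullity Y := #|Y| - mrank M Y.

Lemma mrank_add_nullity Y : mrank M Y + nullity Y = #|Y|.
Proof. by rewrite subnKC // mrank_le_card. Qed.

Lemma nullityS Z Y : Z \subset Y -> nullity Z <= nullity Y.
Proof.
move=> sZY; have [B basB _] := basis_restr_exists (indep0 M) (sub0set Y).
have /and3P[sBY indB _] := basB.
have rZ : #|B :&: Z| <= mrank M Z.
  by apply: indep_card_le_mrank (subsetIr B Z); apply: indep_sub indB; apply: subsetIl.
have cBZ : #|B :\: Z| <= #|Y :\: Z| by apply/subset_leq_card/setSD.
have := cardsID Z B; have := cardsID Z Y; rewrite (setIidPr sZY).
have := mrank_add_nullity Y; have := mrank_add_nullity Z.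
rewrite -(basis_restr_card basB); lia.
Qed.

Lemma nullity_setU_circuit A C : circuit M C -> ~~ (C \subset A) ->
  (nullity A).+1 <= nullity (A :|: C).
Proof.
case/andP=> depC /forallP minC /subsetPn[e eC eA].
have rC := mrank_lt_card_dep depC.
have indAC : indep M (A :&: C).
  apply: indep_sub (implyP (minC e) eC).
  by apply/subsetP => x /setIP[xA xC]; rewrite !inE xC andbT; apply: contraNneq eA => <-.
have := mrank_submod A C; rewrite (mrank_indep indAC).
have := cardsUI A C; have := mrank_add_nullity A; have := mrank_add_nullity (A :|: C).
lia.
Qed.

Lemma union_uptoS s i : i < size s ->
  union_upto s i.+1 = union_upto s i :|: nth set0 s i.
Proof. by move=> lt_is; rewrite /union_upto (take_nth set0 lt_is) big_rcons. Qed.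

Lemma proper_seq_nth_notin s i : (forall C, C \in s -> circuit M C) ->
  proper_seq s -> i < size s -> ~~ (nth set0 s i \subset union_upto s i).
Proof.
move=> circ_s proper_s lt_is; case: i lt_is => [|i] lt_is; last exact: proper_s.
rewrite /union_upto take0 big_nil subset0.
have /andP[depC _] := circ_s _ (mem_nth set0 lt_is).
by apply: contra depC => /eqP ->; apply: indep0.
Qed.

Lemma nullity_union_upto s i : (forall C, C \in s -> circuit M C) ->
  proper_seq s -> i <= size s -> i <= nullity (union_upto s i).
Proof.
move=> circ_s proper_s; elim: i => [|i IHi] lt_is //.
rewrite union_uptoS //; apply: leq_trans (nullity_setU_circuit _ _) => //.
- exact: IHi (ltnW lt_is).
- exact/circ_s/mem_nth.
- exact: proper_seq_nth_notin.
Qed.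

Lemma mrank_add_nullity_le X U : mrank M X + nullity U <= #|X :|: U|.
Proof.
rewrite -(mrank_add_nullity (X :|: U)).
by apply: leq_add; [apply: mrankS (subsetUl X U) | apply: nullityS (subsetUr X U)].
Qed.

Lemma sub_mclosure X U : mrank M (X :|: U) <= mrank M X -> U \subset mclosure M X.
Proof.
move=> rXU; apply/subsetP => e eU.
rewrite inE eqn_leq [mrank M X <= _]mrankS ?subsetUr // andbT.
by apply: leq_trans rXU; apply: mrankS; rewrite subUset subsetUl sub1set inE eU orbT.
Qed.

Lemma coloop_restr_mrank X e : e \in X -> mrank M (X :\ e) < mrank M X ->
  coloop_restr M X e.
Proof.
move=> eX rXe; rewrite /coloop_restr eX; apply/forallP => B; apply/implyP => basB.
apply: contraLR rXe => eB; rewrite -leqNgt -(basis_restr_card basB).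
case/and3P: basB => sBX indB _; apply: indep_card_le_mrank => //.
by apply/subsetP => x xB; rewrite !inE (subsetP sBX x xB) andbT; apply: contraNneq eB => <-.
Qed.

End Matroid.

Theorem lemma3p2 (E : finType) (M : matroid E) (Cs : {set {set E}})
  (HCs : forall C, C \in Cs -> circuit M C)
  (X : {set E}) (s : seq {set E})
  (Hseq : Cseq Cs s) (Hproper : proper_seq s) :
  let t := size s in
  let U := union_upto s t in
  mrank M X + t <= #|X :|: U| /\
  (mrank M X + t = #|X :|: U| ->
     U \subset mclosure M X /\
     (forall e, e \in X :\: U -> coloop_restr M X e)).
Proof.
move=> t U.
have nullU : t <= nullity M U.
  by apply: nullity_union_upto => // C /Hseq; apply: HCs.
have bound Y : mrank M Y + t <= #|Y :|: U|.
  exact: leq_trans (leq_add (leqnn _) nullU) (mrank_add_nullity_le M Y U).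
split=> [|eq_rX]; first exact: bound.
split=> [|e /setDP[eX eU]].
  apply: sub_mclosure; have := bound (X :|: U).
  by rewrite -setUA setUid -eq_rX leq_add2r.
apply: coloop_restr_mrank => //; rewrite -(ltn_add2r t) eq_rX.
apply: leq_ltn_trans (bound (X :\ e)) _.
rewrite (cardsD1 e (X :|: U)) inE eX add1n ltnS subset_leq_card //.
apply/subsetP => x; rewrite !inE => /orP[/andP[-> ->] // | xU].
by rewrite xU orbT andbT; apply: contraNneq eU => <-.
Qed.
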